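(* Let $\mathbb{F}$ be a field, $d\geq3$ and $V$ a vector space over $\mathbb{F}$ of dimension $d+1$. Let $E^*_0,\dots,E^*_d$ be a system of mutually orthogonal idempotents in $\mathrm{End}(V)$ and $A\in\mathrm{End}(V)$ with $E^*_iAE^*_j=0$ if $|i-j|>1$ and $E^*_iAE^*_j\neq0$ if $|i-j|=1$. Assume $A$ is multiplicity-free and bipartite with primitive idempotents $E_0,\dots,E_d$ and eigenvalues $\theta_0,\dots,\theta_d$. Let $\theta^*_0,\dots,\theta^*_d\in\mathbb{F}$ be mutually distinct and $A^*=\sum_i\theta^*_iE^*_i$. Assume $E_0$ is normalizing, $(E_0,E_1)$ is a tail, and $E_2$ is the vertex of $\Delta$ other than $E_0$ adjacent to $E_1$. Let $a^*_i=\operatorname{tr}(E_iA^* )$, let $b^*_0c^*_1$ be as in the context, and put $\psi=\theta^*_1+\theta^*_0-a^*_1-a^*_0$, $\zeta=a^*_0a^*_1-b^*_0c^*_1-\theta^*_0\theta^*_1$. Then $$\psi=\frac{\theta_1(\theta^*_{d-1}-\theta^*_0)-\theta_2(\theta^*_d-\theta^*_1)}{\theta_2-\theta_1},\qquad \zeta=\frac{\theta_2\theta^*_0-\theta_0\theta^*_1}{\theta_2-\theta_0}\cdot\frac{\theta_2(\theta^*_d-\theta^*_1)-\theta_1(\theta^*_{d-1}-\theta^*_0)}{\theta_2-\theta_1}.$$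
   Context: A system of mutually orthogonal idempotents: $E^*_iE^*_j=\delta_{ij}E^*_i$, $\operatorname{rank}E^*_i=1$. $A$ multiplicity-free: $d+1$ distinct eigenvalues in $\mathbb{F}$; $E_i$ is the projection onto the $\theta_i$-eigenspace along the other eigenspaces. Bipartite: $\operatorname{tr}(E^*_iA)=0$ for all $i$. $\Delta$: graph on $E_0,\dots,E_d$ with $E_i\neq E_j$ adjacent iff $E_iA^*E_j\neq0$. $(E_0,E_1)$ is a tail if $E_0$ is adjacent to no vertex other than $E_1$ and $E_1$ is adjacent to at most one vertex other than $E_0$. The matrix $Y$ representing a map $X$ w.r.t. a basis $u_0,\dots,u_d$ satisfies $Xu_j=\sum_iY_{ij}u_i$. An eigenvalue $\theta$ of $A$ is normalizing if some basis with $v_i\in E^*_iV$ makes every row sum of the matrix representing $A$ equal to $\theta$; $E_i$ is normalizing if $\theta_i$ is. For any basis $w_0,\dots,w_d$ with $w_i\in E_iV$, $b^*_0$ and $c^*_1$ are the $(0,1)$- and $(1,0)$-entries of the matrix representing $A^*$; the product $b^*_0c^*_1$ is independent of the choice. *)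

(* End(V) for dim V = n is modelled as 'M[F]_n acting on
   column vectors 'cV[F]_n by left multiplication (X acts as v |-> X *m v). *)
From HB Require Import structures.
From mathcomp Require Import all_boot all_order all_algebra.
Set Implicit Arguments. Unset Strict Implicit. Unset Printing Implicit Defensive.
Import GRing.Theory.
Local Open Scope ring_scope.

Section Defs.
Variables (F : fieldType) (n : nat).
Local Notation M := 'M[F]_n.
Local Notation vec := 'cV[F]_n.

Definition orth_idem_system (Es : 'I_n -> M) : Prop :=
  (forall i j, Es i *m Es j = if i == j then Es i else 0) /\
  (forall i, \rank (Es i) = 1%N).

(* A is multiplicity-free with n distinct eigenvalues th i, and E i is the
   projection onto the th i-eigenspace along the other eigenspaces
   (E i nonzero, mutually orthogonal idempotents summing to 1, A E_i = th_i E_i). *)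
Definition prim_idems (A : M) (th : 'I_n -> F) (E : 'I_n -> M) : Prop :=
  [/\ injective th,
      (forall i j, E i *m E j = if i == j then E i else 0),
      \sum_i E i = 1%:M,
      (forall i, A *m E i = th i *: E i) &
      (forall i, E i != 0)].

Definition bipartite (Es : 'I_n -> M) (A : M) : Prop :=
  forall i, \tr (Es i *m A) = 0.

Definition basis_cols (u : 'I_n -> vec) : Prop :=
  (\matrix_(i, j) u j i 0) \in unitmx.

Definition represents (X : M) (u : 'I_n -> vec) (Y : M) : Prop :=
  forall j, X *m u j = \sum_i Y i j *: u i.

Definition normalizing (Es : 'I_n -> M) (A : M) (theta : F) : Prop :=
  exists v : 'I_n -> vec,
    [/\ (forall i, exists x : vec, v i = Es i *m x),
        basis_cols v &
        exists Y : M, represents A v Y /\ (forall i, \sum_j Y i j = theta)].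

Definition adj (E : 'I_n -> M) (As : M) (i j : 'I_n) : bool :=
  (i != j) && (E i *m As *m E j != 0).

Definition is_tail (E : 'I_n -> M) (As : M) (i0 i1 : 'I_n) : Prop :=
  (forall j, j != i1 -> ~~ adj E As i0 j) /\
  (forall j k, j != i0 -> k != i0 -> adj E As i1 j -> adj E As i1 k -> j = k).

End Defs.

Definition ix (d k : nat) : 'I_d.+1 := inord k.

(* Work in two bases: a normalizing basis of E*-eigenvectors, in which A is a
   hollow tridiagonal matrix B with constant row sums th_0, and a basis of
   A-eigenvectors, in which A* has a matrix Y.  A tridiagonal matrix is
   diagonally symmetrizable, so A and A* (hence every E_i) are self-adjoint for
   one nondegenerate bilinear form: Delta is undirected, and the tail forces the
   columns 0 and 1 of Y to be supported on {0,1} and {0,1,2}.  Hence if s is the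
   th_0-eigenvector whose normalizing coordinates are all 1, then
   (A* - a*_0) s is a th_1-eigenvector and (A* - a*_1)(A* - a*_0) s - b*_0 c*_1 s
   a th_2-eigenvector.  Their normalizing coordinates are polynomials in the
   th*_k, and the first and last rows of B, each with the single entry th_0,
   give four scalar relations from which psi and zeta are solved. *)

From HB Require Import structures.
From mathcomp Require Import all_boot all_order all_algebra.
From mathcomp Require Import ring zify.

Set Implicit Arguments. Unset Strict Implicit. Unset Printing Implicit Defensive.
Import GRing.Theory.
Local Open Scope ring_scope.

Section Coordinates.
Variables (F : fieldType) (n : nat).
Implicit Types (X Y M U W DU DW : 'M[F]_n) (u : 'I_n -> 'cV[F]_n).

Definition basis_mx u : 'M[F]_n := \matrix_(i, j) u j i 0.

Lemma represents_mulmx X u Y : represents X u Y -> X *m basis_mx u = basis_mx u *m Y.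
Proof.
move=> rep; apply/matrixP=> i j; rewrite !mxE.
under eq_bigr do rewrite mxE.
have := congr1 (fun c : 'cV[F]_n => c i 0) (rep j); rewrite /= mxE summxE => ->.
by apply: eq_bigr => k _; rewrite !mxE mulrC.
Qed.

Lemma represents_mxE X u Y : basis_cols u -> represents X u Y ->
  X = basis_mx u *m Y *m invmx (basis_mx u).
Proof. by move=> u_basis /represents_mulmx <-; rewrite mulmxK. Qed.

Lemma represents_eigen X u (c : 'I_n -> F) :
  (forall j, X *m u j = c j *: u j) -> represents X u (diag_mx (\row_j c j)).
Proof.
move=> eig j; rewrite eig (bigD1 j) //= big1 ?addr0 => [|i /negPf nij].
  by rewrite !mxE eqxx mulr1n.
by rewrite mxE nij mulr0n scale0r.
Qed.

Lemma change_basis_intertwine X W U DW DU : W \in unitmx ->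
  X *m W = W *m DW -> X *m U = U *m DU -> DW *m (invmx W *m U) = invmx W *m U *m DU.
Proof.
move=> W_unit XW XU; have -> : DW = invmx W *m X *m W by rewrite -mulmxA XW mulKmx.
by rewrite !mulmxA mulmxK // -[LHS]mulmxA XU mulmxA.
Qed.

Lemma delta_mx_sandwich M i j :
  delta_mx i i *m M *m delta_mx j j = M i j *: delta_mx i j.
Proof.
apply/matrixP=> a b; rewrite !mxE (bigD1 j) //= big1 ?addr0; last first.
  by move=> k /negPf nkj; rewrite !mxE nkj /= mulr0.
rewrite !mxE (bigD1 i) //= big1 ?addr0; last first.
  by move=> k /negPf nki; rewrite !mxE nki andbF mul0r.
rewrite !mxE !eqxx /= andbT.
by case: (a == i); case: (b == j); rewrite ?(mulr1n, mulr0n, mulr1, mul1r, mulr0, mul0r).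
Qed.

Section Projections.
Variables (P : 'I_n -> 'M[F]_n) (u : 'I_n -> 'cV[F]_n).
Hypothesis P_orth : forall i j, P i *m P j = if i == j then P i else 0.
Hypothesis u_in_P : forall i, exists x, u i = P i *m x.
Hypothesis u_basis : basis_cols u.

Lemma represents_proj k : represents (P k) u (delta_mx k k).
Proof.
move=> j; have [x ux] := u_in_P j; rewrite ux mulmxA P_orth.
rewrite (bigD1 k) //= big1 ?addr0 => [|i /negPf nik]; last first.
  by rewrite mxE nik scale0r.
rewrite mxE eqxx [j == k]eq_sym.
by case: (eqVneq k j) => [->|_]; rewrite ?ux ?scale1r ?scale0r ?mul0mx.
Qed.

Lemma combination_proj_eigvec (c : 'I_n -> F) j :
  (\sum_i c i *: P i) *m u j = c j *: u j.
Proof.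
have [x ux] := u_in_P j; rewrite mulmx_suml (bigD1 j) //= big1 ?addr0.
  by rewrite -scalemxAl ux mulmxA P_orth eqxx.
by move=> i /negPf nij; rewrite -scalemxAl ux mulmxA P_orth nij mul0mx scaler0.
Qed.

Lemma proj_basis_mxE k : P k = basis_mx u *m delta_mx k k *m invmx (basis_mx u).
Proof. exact: represents_mxE u_basis (represents_proj k). Qed.

Lemma proj_mul_proj X Y i j : represents X u Y ->
  P i *m X *m P j = basis_mx u *m (Y i j *: delta_mx i j) *m invmx (basis_mx u).
Proof.
move=> /(represents_mxE u_basis) ->; rewrite !proj_basis_mxE -delta_mx_sandwich.
by rewrite !mulmxA mulmxKV // -!mulmxA mulKmx.
Qed.

Lemma proj_mul_proj_eq0 X Y i j : represents X u Y ->
  (P i *m X *m P j == 0) = (Y i j == 0).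
Proof.
move=> /proj_mul_proj ->; apply/eqP/eqP => [|->]; last first.
  by rewrite scale0r mulmx0 mul0mx.
move/(congr1 (fun M => invmx (basis_mx u) *m M *m basis_mx u)).
rewrite /= mulmx0 mul0mx !mulmxA mulmxKV // mulVmx // mul1mx => /matrixP/(_ i j).
by rewrite !mxE !eqxx mulr1.
Qed.

Lemma mxtrace_proj_mul X Y k : represents X u Y -> \tr (P k *m X) = Y k k.
Proof.
move=> rep; have -> : \tr (P k *m X) = \tr (P k *m X *m P k).
  by rewrite [RHS]mxtrace_mulC mulmxA P_orth eqxx.
rewrite (proj_mul_proj k k rep) mxtrace_mulC mulmxA mulVmx // mul1mx mxtraceZ.
rewrite /mxtrace (bigD1 k) //= big1 ?addr0 => [|i /negPf nik].
  by rewrite mxE !eqxx mulr1.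
by rewrite mxE nik.
Qed.

End Projections.
End Coordinates.

Section SelfAdjoint.
Variables (F : fieldType) (n : nat).
Implicit Types (S X Y Z U D : 'M[F]_n).

Definition self_adjoint S X := X^T *m S = S *m X.

Lemma self_adjoint_conj U D Y X : U \in unitmx -> X *m U = U *m Y ->
  self_adjoint D Y -> self_adjoint ((invmx U)^T *m D *m invmx U) X.
Proof.
move=> U_unit XU DY; have -> : X = U *m Y *m invmx U by rewrite -XU mulmxK.
rewrite /self_adjoint !trmx_mul !mulmxA.
rewrite -(mulmxA _ U^T) -(trmx_mul (invmx U) U) mulVmx // trmx1 mulmx1.
rewrite -(mulmxA _ (invmx U) U) mulVmx // mulmx1.
by rewrite -(mulmxA _ Y^T) DY !mulmxA.
Qed.

Lemma self_adjoint_mul_eq0 S X Y Z : S \in unitmx ->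
  self_adjoint S X -> self_adjoint S Y -> self_adjoint S Z ->
  X *m Y *m Z = 0 -> Z *m Y *m X = 0.
Proof.
move=> S_unit SX SY SZ XYZ0.
have : S *m (Z *m Y *m X) = (X *m Y *m Z)^T *m S.
  by rewrite !trmx_mul -!mulmxA SX (mulmxA Y^T) SY !mulmxA SZ.
rewrite XYZ0 trmx0 mul0mx => /(congr1 (mulmx (invmx S))).
by rewrite mulKmx // mulmx0.
Qed.

(* The eigenspaces of a self-adjoint [A] are mutually orthogonal, so its
   spectral projections are self-adjoint too. *)
Lemma self_adjoint_prim_idem S A th E k :
  prim_idems A th E -> self_adjoint S A -> self_adjoint S (E k).
Proof.
case=> th_inj _ E_sum AE _ SA; rewrite /self_adjoint.
have cross i j : i != j -> (E i)^T *m S *m E j = 0.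
  move=> nij; set M := (E i)^T *m S *m E j.
  have SAj : (E i)^T *m S *m A *m E j = th j *: M by rewrite -mulmxA AE scalemxAr.
  have SAi : (E i)^T *m S *m A *m E j = th i *: M.
    by rewrite -(mulmxA _ S) -SA mulmxA -trmx_mul AE linearZ /= -!scalemxAl.
  have : (th i - th j) *: M = 0 by rewrite scalerBl -SAi -SAj subrr.
  move/eqP; rewrite scaler_eq0 subr_eq0 => /orP[/eqP/th_inj/eqP|/eqP //].
  by rewrite (negPf nij).
have ET_sum : \sum_i (E i)^T = 1%:M :> 'M[F]_n by rewrite -trmx1 -E_sum raddf_sum.
have -> : S *m E k = (E k)^T *m S *m E k.
  rewrite -{1}(mul1mx S) -ET_sum !mulmx_suml (bigD1 k) //= big1 ?addr0 //.
  by move=> i; apply: cross.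
rewrite -{1}(mulmx1 ((E k)^T *m S)) -E_sum mulmx_sumr (bigD1 k) //= big1 ?addr0 //.
by move=> i nik; apply: cross; rewrite eq_sym.
Qed.

End SelfAdjoint.

Section TridiagonalSymmetrizer.
Variables (F : fieldType) (d : nat) (B : 'M[F]_d.+1).
Hypothesis B_tridiag : forall i j : 'I_d.+1, (i.+1 < j)%N || (j.+1 < i)%N -> B i j = 0.
Hypothesis B_offdiag : forall i j : 'I_d.+1,
  (j == i.+1 :> nat) || (i == j.+1 :> nat) -> B i j != 0.

(* [symmetrizer k] solves [c_k B_(k,k+1) = c_(k+1) B_(k+1,k)] recursively. *)
Fixpoint symmetrizer (k : nat) : F :=
  if k is k'.+1 then
    symmetrizer k' * B (inord k') (inord k) / B (inord k) (inord k')
  else 1.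

Lemma symmetrizer_neq0 k : (k <= d)%N -> symmetrizer k != 0.
Proof.
elim: k => [|k IH] lekd /=; first exact: oner_neq0.
have Bk (i j : nat) : (i <= d)%N -> (j <= d)%N -> (j == i.+1) || (i == j.+1) ->
    B (inord i) (inord j) != 0.
  by move=> lid ljd adj; apply: B_offdiag; rewrite !inordK.
by rewrite !mulf_neq0 ?invr_neq0 ?IH ?Bk ?eqxx ?orbT // ltnW.
Qed.

Lemma symmetrizer_sym (i j : 'I_d.+1) :
  symmetrizer i * B i j = B j i * symmetrizer j.
Proof.
wlog lij : i j / (i <= j)%N.
  move=> sym; case: (leqP i j) => [|/ltnW lji]; first exact: sym.
  by rewrite [LHS]mulrC [RHS]mulrC (sym j i lji).
have [eij|nij] := eqVneq (j : nat) i.+1; last first.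
  case: (eqVneq i j) => [->|nij']; first by rewrite mulrC.
  rewrite !B_tridiag ?mulr0 ?mul0r //; apply/orP;
  by move: nij nij'; rewrite -val_eqE /=; lia.
rewrite eij /= inord_val.
have -> : inord i.+1 = j by apply: val_inj; rewrite /= inordK -eij.
rewrite [RHS]mulrC divfK //.
by apply: B_offdiag; rewrite eij eqxx orbT.
Qed.

Lemma tridiag_symmetrizable :
  exists2 c : 'rV[F]_d.+1, diag_mx c \in unitmx & self_adjoint (diag_mx c) B.
Proof.
exists (\row_j symmetrizer j).
  rewrite unitmxE det_diag unitfE; apply/prodf_neq0 => j _; rewrite mxE.
  by apply: symmetrizer_neq0; rewrite -ltnS.
apply/matrixP=> i j; rewrite /self_adjoint mul_mx_diag mul_diag_mx !mxE.
by rewrite symmetrizer_sym.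
Qed.

End TridiagonalSymmetrizer.

Section ColumnSupport.
Variables (F : fieldType) (n : nat).

Lemma diag_mx_mul_supported (th : 'I_n -> F) (z : 'cV[F]_n) k :
  (forall j, j != k -> z j 0 = 0) -> diag_mx (\row_j th j) *m z = th k *: z.
Proof.
move=> zk; rewrite mul_diag_mx; apply/matrixP=> i j; rewrite !mxE (ord1 j).
by case: (eqVneq i k) => [->|/zk ->]; rewrite ?mulr0.
Qed.

Lemma diag_mx_eigvec_supported (th : 'I_n -> F) (z : 'cV[F]_n) k :
  injective th -> diag_mx (\row_j th j) *m z = th k *: z -> forall j, j != k -> z j 0 = 0.
Proof.
move=> th_inj /matrixP eig j njk; have := eig j 0; rewrite mul_diag_mx !mxE.
move/eqP; rewrite -subr_eq0 -mulrBl mulf_eq0 subr_eq0 => /orP[/eqP/th_inj ejk|/eqP //].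
by rewrite ejk eqxx in njk.
Qed.

Lemma mulmx_col_supported (M : 'M[F]_n) (z : 'cV[F]_n) k i :
  (forall j, j != k -> z j 0 = 0) -> (M *m z) i 0 = M i k * z k 0.
Proof.
move=> zk; rewrite mxE (bigD1 k) //= big1 ?addr0 // => j /zk ->.
exact: mulr0.
Qed.

Lemma eigvec_row_single (M : 'M[F]_n) (y : 'cV[F]_n) (lam r : F) i k :
  (forall j, j != k -> M i j = 0) -> (forall i, \sum_j M i j = r) ->
  M *m y = lam *: y -> r * y k 0 = lam * y i 0.
Proof.
move=> row_i rows eig.
have Mik : M i k = r by rewrite -(rows i) (bigD1 k) //= big1 ?addr0.
have := congr1 (fun c : 'cV[F]_n => c i 0) eig; rewrite /= !mxE => <-.
by rewrite (bigD1 k) //= big1 ?addr0 ?Mik // => j /row_i ->; rewrite mul0r.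
Qed.

End ColumnSupport.

Section TailEigenvectors.
Variables (F : fieldType) (n : nat) (P B Y : 'M[F]_n) (th ths : 'I_n -> F).
Variables (i0 i1 i2 : 'I_n).
Hypotheses (P_unit : P \in unitmx) (th_inj : injective th) (i01 : i0 != i1).
Hypothesis PB : diag_mx (\row_j th j) *m P = P *m B.
Hypothesis YP : Y *m P = P *m diag_mx (\row_j ths j).
Hypothesis B_rows : forall i, \sum_j B i j = th i0.
Hypothesis Y_col0 : forall j, j != i0 -> j != i1 -> Y j i0 = 0.
Hypothesis Y_col1 : forall j, j != i0 -> j != i1 -> j != i2 -> Y j i1 = 0.

Let a0 := Y i0 i0.
Let a1 := Y i1 i1.
Let b := Y i0 i1 * Y i1 i0.
Let x : 'cV[F]_n := P *m const_mx 1.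

Lemma eigvec_of_supported (y : 'cV[F]_n) k :
  (forall j, j != k -> (P *m y) j 0 = 0) -> B *m y = th k *: y.
Proof.
move=> Py_k; apply: (can_inj (mulKmx P_unit)).
by rewrite mulmxA -PB -mulmxA (diag_mx_mul_supported _ Py_k) scalemxAr.
Qed.

Lemma x_supported j : j != i0 -> x j 0 = 0.
Proof.
apply: (diag_mx_eigvec_supported th_inj); rewrite /x mulmxA PB -mulmxA.
have -> : B *m const_mx 1 = th i0 *: (const_mx 1 : 'cV[F]_n).
  apply/matrixP=> i l; rewrite !mxE -(B_rows i) mulr1.
  by apply: eq_bigr => k _; rewrite mxE mulr1.
by rewrite scalemxAr.
Qed.

Lemma mulmx_y1 : P *m \col_k (ths k - a0) = Y *m x - a0 *: x.
Proof.
have -> : \col_k (ths k - a0) = diag_mx (\row_j ths j) *m const_mx 1 - a0 *: const_mx 1.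
  by apply/matrixP=> k j; rewrite mul_diag_mx !mxE !mulr1.
by rewrite mulmxBr mulmxA -YP -mulmxA scalemxAr.
Qed.

Lemma mulmx_y1E j :
  (P *m \col_k (ths k - a0)) j 0 = Y j i0 * x i0 0 - a0 * x j 0.
Proof.
rewrite mulmx_y1 mxE (mulmx_col_supported _ _ x_supported).
by rewrite [(- (a0 *: x)) j 0]mxE [(a0 *: x) j 0]mxE.
Qed.

Lemma mulmx_y1_supported j : j != i1 -> (P *m \col_k (ths k - a0)) j 0 = 0.
Proof.
move=> nj1; rewrite mulmx_y1E.
case: (eqVneq j i0) => [->|nj0]; first by rewrite subrr.
by rewrite Y_col0 // mul0r (x_supported nj0) mulr0 subrr.
Qed.

Lemma tail_eigvec1 : B *m \col_k (ths k - a0) = th i1 *: \col_k (ths k - a0).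
Proof. exact: eigvec_of_supported mulmx_y1_supported. Qed.

Lemma tail_eigvec2 :
  let y2 := \col_k ((ths k - a1) * (ths k - a0) - b) in B *m y2 = th i2 *: y2.
Proof.
move=> y2; apply: eigvec_of_supported => j nj2.
set z := P *m \col_k (ths k - a0).
have -> : P *m y2 = Y *m z - a1 *: z - b *: x.
  have -> : y2 = diag_mx (\row_j ths j) *m \col_k (ths k - a0)
      - a1 *: \col_k (ths k - a0) - b *: const_mx 1.
    by apply/matrixP=> k l; rewrite mul_diag_mx !mxE mulr1 mulrBl.
  by rewrite !mulmxBr mulmxA -YP -mulmxA !scalemxAr.
rewrite mxE [(Y *m z - a1 *: z) j 0]mxE (mulmx_col_supported _ _ mulmx_y1_supported).
rewrite [(- (a1 *: z)) j 0]mxE [(a1 *: z) j 0]mxE [(- (b *: x)) j 0]mxE [(b *: x) j 0]mxE.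
have x_i1 : x i1 0 = 0 by apply: x_supported; rewrite eq_sym.
have z_i1 : z i1 0 = Y i1 i0 * x i0 0 by rewrite /z mulmx_y1E x_i1 mulr0 subr0.
case: (eqVneq j i0) => [->|nj0].
  by rewrite z_i1 (mulmx_y1_supported i01) mulrA mulr0 subr0 subrr.
case: (eqVneq j i1) => [->|nj1]; first by rewrite x_i1 mulr0 subr0 subrr.
by rewrite Y_col1 // (mulmx_y1_supported nj1) (x_supported nj0) mul0r !mulr0 !subr0.
Qed.

Lemma tail_row_relations r k : (forall j, j != k -> B r j = 0) ->
  th i0 * (ths k - a0) = th i1 * (ths r - a0) /\
  th i0 * ((ths k - a1) * (ths k - a0) - b) =
    th i2 * ((ths r - a1) * (ths r - a0) - b).
Proof.
move=> row_r; split.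
  by have := eigvec_row_single row_r B_rows tail_eigvec1; rewrite !mxE.
by have := eigvec_row_single row_r B_rows tail_eigvec2; rewrite !mxE.
Qed.

End TailEigenvectors.

Lemma psi_zeta_of_relations (F : fieldType) (t0 t1 t2 s0 s1 sm sd a0 a1 b : F) :
  t2 - t1 != 0 -> t2 - t0 != 0 -> sd - s0 != 0 ->
  t0 * (s1 - a0) = t1 * (s0 - a0) -> t0 * (sm - a0) = t1 * (sd - a0) ->
  t0 * ((s1 - a1) * (s1 - a0) - b) = t2 * ((s0 - a1) * (s0 - a0) - b) ->
  t0 * ((sm - a1) * (sm - a0) - b) = t2 * ((sd - a1) * (sd - a0) - b) ->
  s1 + s0 - a1 - a0 = (t1 * (sm - s0) - t2 * (sd - s1)) / (t2 - t1) /\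
  a0 * a1 - b - s0 * s1 = (t2 * s0 - t0 * s1) / (t2 - t0) *
    ((t2 * (sd - s1) - t1 * (sm - s0)) / (t2 - t1)).
Proof.
move=> ne21 ne20 ned0 R1 R2 R3 R4.
set psi := s1 + s0 - a1 - a0; set N := t1 * (sm - s0) - t2 * (sd - s1).
(* The two quadratic relations, minus the linear ones times [sm - s0 + psi],
   leave a multiple of [sd - s0]. *)
have psiE : psi * (t2 - t1) = N.
  apply/eqP; rewrite -subr_eq0 -(mulrI_eq0 _ (lregP ned0)).
  have -> : (sd - s0) * (psi * (t2 - t1) - N) =
      (t0 * ((s1 - a1) * (s1 - a0) - b) - t2 * ((s0 - a1) * (s0 - a0) - b))
    - (t0 * ((sm - a1) * (sm - a0) - b) - t2 * ((sd - a1) * (sd - a0) - b))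
    + ((t0 * (sm - a0) - t1 * (sd - a0)) - (t0 * (s1 - a0) - t1 * (s0 - a0)))
      * (sm - s0 + psi).
    by rewrite /psi /N; ring.
  by rewrite R1 R2 R3 R4 !subrr mul0r addr0.
have zetaE : (a0 * a1 - b - s0 * s1) * (t2 - t0) = (t2 * s0 - t0 * s1) * - psi.
  have -> : (a0 * a1 - b - s0 * s1) * (t2 - t0) = (t2 * s0 - t0 * s1) * - psi
      - (t0 * ((s1 - a1) * (s1 - a0) - b) - t2 * ((s0 - a1) * (s0 - a0) - b)).
    by rewrite /psi; ring.
  by rewrite R3 subrr subr0.
have Npsi : (t2 * (sd - s1) - t1 * (sm - s0)) / (t2 - t1) = - psi.
  by apply: (mulIf ne21); rewrite divfK // mulNr psiE /N; ring.
split; first by rewrite -psiE mulfK.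
by apply: (mulIf ne20); rewrite zetaE Npsi mulrAC divfK.
Qed.

Lemma prim_idem_sandwich_sym (F : fieldType) (d : nat) (A As U B : 'M[F]_d.+1)
    (th ths : 'I_d.+1 -> F) (E : 'I_d.+1 -> 'M[F]_d.+1) :
  U \in unitmx -> A *m U = U *m B -> As *m U = U *m diag_mx (\row_j ths j) ->
  (forall i j : 'I_d.+1, (i.+1 < j)%N || (j.+1 < i)%N -> B i j = 0) ->
  (forall i j : 'I_d.+1, (j == i.+1 :> nat) || (i == j.+1 :> nat) -> B i j != 0) ->
  prim_idems A th E ->
  forall i j, E i *m As *m E j = 0 -> E j *m As *m E i = 0.
Proof.
move=> U_unit AU AsU B_tridiag B_offdiag prim.
have [c c_unit Bc] := tridiag_symmetrizable B_tridiag B_offdiag.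
set S := (invmx U)^T *m diag_mx c *m invmx U.
have S_unit : S \in unitmx by rewrite !unitmx_mul unitmx_tr !unitmx_inv U_unit c_unit.
have SA : self_adjoint S A := self_adjoint_conj U_unit AU Bc.
have SAs : self_adjoint S As.
  by apply: self_adjoint_conj U_unit AsU _; rewrite /self_adjoint tr_diag_mx diag_mxC.
move=> i j; apply: (self_adjoint_mul_eq0 S_unit) => //;
  exact: self_adjoint_prim_idem prim SA.
Qed.

Lemma tail_col_supported (F : fieldType) (n : nat) (E : 'I_n -> 'M[F]_n)
    (As Y : 'M[F]_n) (w : 'I_n -> 'cV[F]_n) (i0 i1 i2 : 'I_n) :
  (forall i j, E i *m E j = if i == j then E i else 0) ->
  (forall i, exists x, w i = E i *m x) -> basis_cols w -> represents As w Y ->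
  (forall i j, E i *m As *m E j = 0 -> E j *m As *m E i = 0) ->
  is_tail E As i0 i1 -> adj E As i1 i2 -> i2 != i0 ->
  (forall j, j != i0 -> j != i1 -> Y j i0 = 0) /\
  (forall j, j != i0 -> j != i1 -> j != i2 -> Y j i1 = 0).
Proof.
move=> E_orth w_in w_basis As_rep E_sym [tail0 tail1] adj12 n20.
have Y_eq0 i j : E i *m As *m E j = 0 -> Y j i = 0.
  by move/E_sym/eqP; rewrite (proj_mul_proj_eq0 E_orth w_in w_basis _ _ As_rep) => /eqP.
split=> [j nj0 nj1 | j nj0 nj1 nj2]; apply: Y_eq0; apply/eqP.
  by have := tail0 j nj1; rewrite /adj eq_sym nj0 negbK.
apply: contraNT nj2 => adj1j; apply/eqP; apply: tail1 nj0 n20 _ adj12.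
by rewrite /adj eq_sym nj1.
Qed.

Lemma ixK (d k : nat) : (k <= d)%N -> ix d k = k :> nat.
Proof. by move=> le_kd; rewrite /ix inordK. Qed.

Lemma ix_neq (d a b : nat) : (a <= d)%N -> (b <= d)%N -> a != b -> ix d a != ix d b.
Proof. by move=> le_ad le_bd; rewrite -val_eqE /= !ixK. Qed.

Lemma hollow_tridiag_end_rows (F : fieldType) (d : nat) (B : 'M[F]_d.+1) :
  (0 < d)%N -> (forall k, B k k = 0) ->
  (forall i j : 'I_d.+1, (i.+1 < j)%N || (j.+1 < i)%N -> B i j = 0) ->
  (forall j, j != ix d 1 -> B (ix d 0) j = 0) /\
  (forall j, j != ix d d.-1 -> B (ix d d) j = 0).
Proof.
move=> d_gt0 B_hollow B_tridiag.
have row (r k : 'I_d.+1) :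
    (forall j : 'I_d.+1, j != r -> j != k -> (r.+1 < j)%N || (j.+1 < r)%N) ->
    forall j, j != k -> B r j = 0.
  move=> far j njk; case: (eqVneq j r) => [->|njr]; first exact: B_hollow.
  exact: B_tridiag (far j njr njk).
by split; apply: row => j; have := ltn_ord j; rewrite -!val_eqE /= !ixK; lia.
Qed.

Theorem lemma8p3 (F : fieldType) (d : nat) (hd : (3 <= d)%N)
  (Es : 'I_d.+1 -> 'M[F]_d.+1) (A : 'M[F]_d.+1)
  (th : 'I_d.+1 -> F) (E : 'I_d.+1 -> 'M[F]_d.+1) (ths : 'I_d.+1 -> F) :
  orth_idem_system Es ->
  (forall i j : 'I_d.+1, (i.+1 < j)%N || (j.+1 < i)%N ->
     Es i *m A *m Es j = 0) ->
  (forall i j : 'I_d.+1, (j == i.+1 :> nat) || (i == j.+1 :> nat) ->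
     Es i *m A *m Es j != 0) ->
  prim_idems A th E ->
  bipartite Es A ->
  injective ths ->
  let As := \sum_i ths i *: Es i in
  normalizing Es A (th (ix d 0)) ->
  is_tail E As (ix d 0) (ix d 1) ->
  adj E As (ix d 1) (ix d 2) ->
  forall (w : 'I_d.+1 -> 'cV[F]_d.+1) (Y : 'M[F]_d.+1),
  (forall i, exists x : 'cV[F]_d.+1, w i = E i *m x) ->
  basis_cols w ->
  represents As w Y ->
  let ast i := \tr (E i *m As) in
  let bc := Y (ix d 0) (ix d 1) * Y (ix d 1) (ix d 0) in
  let th0 := th (ix d 0) in let th1 := th (ix d 1) in let th2 := th (ix d 2) in
  let s0 := ths (ix d 0) in let s1 := ths (ix d 1) in
  let sdm1 := ths (ix d d.-1) in let sd := ths (ix d d) in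
  let psi := s1 + s0 - ast (ix d 1) - ast (ix d 0) in
  let zeta := ast (ix d 0) * ast (ix d 1) - bc - s0 * s1 in
  psi = (th1 * (sdm1 - s0) - th2 * (sd - s1)) / (th2 - th1) /\
  zeta = (th2 * s0 - th0 * s1) / (th2 - th0) *
         ((th2 * (sd - s1) - th1 * (sdm1 - s0)) / (th2 - th1)).
Proof.
move=> [Es_orth _] A_tridiag A_offdiag prim bip ths_inj As
  [v [v_in v_basis [B [A_rep B_rows]]]] tail adj12 w Y w_in w_basis As_rep
  ast bc th0 th1 th2 s0 s1 sdm1 sd psi zeta.
have [th_inj E_orth _ AE _] := prim.
have n01 : ix d 0 != ix d 1 by apply: ix_neq; lia.
have n20 : ix d 2 != ix d 0 by apply: ix_neq; lia.
have B_eq0 := proj_mul_proj_eq0 Es_orth v_in v_basis.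
have B_tridiag (i j : 'I_d.+1) : (i.+1 < j)%N || (j.+1 < i)%N -> B i j = 0.
  by move/A_tridiag/eqP; rewrite (B_eq0 _ _ i j A_rep) => /eqP.
have B_offdiag (i j : 'I_d.+1) : (j == i.+1 :> nat) || (i == j.+1 :> nat) -> B i j != 0.
  by move/A_offdiag; rewrite (B_eq0 _ _ i j A_rep).
have B_hollow k : B k k = 0 by rewrite -(mxtrace_proj_mul Es_orth v_in v_basis k A_rep).
have AsU : As *m basis_mx v = basis_mx v *m diag_mx (\row_j ths j).
  exact/represents_mulmx/represents_eigen/combination_proj_eigvec.
have E_sym := prim_idem_sandwich_sym v_basis (represents_mulmx A_rep) AsU
  B_tridiag B_offdiag prim.
have [Y_col0 Y_col1] :=
  tail_col_supported E_orth w_in w_basis As_rep E_sym tail adj12 n20.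
have A_w j : A *m w j = th j *: w j by have [x ->] := w_in j; rewrite mulmxA AE scalemxAl.
have PB := change_basis_intertwine w_basis (represents_mulmx (represents_eigen A_w))
  (represents_mulmx A_rep).
have YP := change_basis_intertwine w_basis (represents_mulmx As_rep) AsU.
have P_unit : invmx (basis_mx w) *m basis_mx v \in unitmx.
  by rewrite unitmx_mul unitmx_inv w_basis v_basis.
have rel := tail_row_relations P_unit th_inj n01 PB YP B_rows Y_col0 Y_col1.
have [row0 rowd] := hollow_tridiag_end_rows (ltnW (ltnW hd)) B_hollow B_tridiag.
have [R1 R3] := rel _ _ row0; have [R2 R4] := rel _ _ rowd.
rewrite /psi /zeta /bc /ast !(mxtrace_proj_mul E_orth w_in w_basis _ As_rep).
apply: psi_zeta_of_relations R1 R2 R3 R4;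
  by rewrite subr_eq0 ?(inj_eq th_inj) ?(inj_eq ths_inj); apply: ix_neq; lia.
Qed.
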